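(* $$\lim_{n\to\infty}\left(\frac{\alpha_n(1\text{-}23\text{-}4)}{n!}\right)^{1/n}=0.$$
   Context: A permutation $\pi=\pi_1\cdots\pi_n$ of $\{1,\dots,n\}$ contains the generalized pattern $1\text{-}23\text{-}4$ if there are indices $a<b<b+1<c$ with $\pi_a<\pi_b<\pi_{b+1}<\pi_c$; otherwise it avoids it. $\alpha_n(1\text{-}23\text{-}4)$ is the number of permutations of $\{1,\dots,n\}$ avoiding it. *)

From mathcomp Require Import all_boot all_fingroup.
From Stdlib Require Import Reals.
Set Implicit Arguments. Unset Strict Implicit. Unset Printing Implicit Defensive.

(* Permutations of {1..n} are represented as permutations s : 'S_n of {0..n-1};
   positions are 0-based too.  Pattern 1-23-4: indices a < b, b+1 < c with
   s a < s b < s (b+1) < s c.  *)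
Definition contains_1_23_4 (n : nat) (s : 'S_n) : bool :=
  [exists a : 'I_n, exists b : 'I_n, exists b1 : 'I_n, exists c : 'I_n,
     [&& a < b, val b1 == (val b).+1, b1 < c,
         s a < s b, s b < s b1 & s b1 < s c]].

Definition alpha_1_23_4 (n : nat) : nat :=
  #|[set s : 'S_n | ~~ contains_1_23_4 s]|.

From Stdlib Require Import Reals Lra Psatz.
From mathcomp Require Import all_boot all_fingroup zify.
Set Implicit Arguments. Unset Strict Implicit. Unset Printing Implicit Defensive.

(* A permutation with at most [K] ascents is determined by the map sending each
   value to the index of the descending run containing it, so there are at most
   [(K+1)^n] of them.  If [s] avoids 1-23-4, then at every ascent either the bottom
   is a left-to-right minimum or the top is a right-to-left maximum, and both kinds
   of positions carry decreasing subsequences.  So an avoider has fewer than [2t]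
   ascents or a decreasing subsequence of length [t], and the latter holds for at
   most [2^n n!/t!] permutations.  With [t = n/(12d)] this gives
   [alpha_n d^n <= n!] for all large [n], for every [d]. *)

Section Ascents.
Variables (n : nat) (s : 'S_n).

Definition value_at (i : nat) : nat := if insub i is Some j then val (s j) else 0.

Lemma value_atE (i : 'I_n) : value_at i = s i.
Proof. by case: i => i lt_in; rewrite /value_at insubT. Qed.

Lemma value_at_inj i k : i < n -> k < n -> value_at i = value_at k -> i = k.
Proof.
move=> lt_in lt_kn.
have := value_atE (Ordinal lt_in); have := value_atE (Ordinal lt_kn) => /= -> ->.
by move/val_inj/perm_inj => [].
Qed.

Definition ascent (b : nat) : bool := (b.+1 < n) && (value_at b < value_at b.+1).

Definition nasc (i : nat) : nat := \sum_(0 <= b < i) ascent b.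

Lemma nascS i : nasc i.+1 = nasc i + ascent i.
Proof. by rewrite /nasc big_nat_recr. Qed.

Lemma nasc_mono : {homo nasc : i j / i <= j}.
Proof.
move=> i j /subnK <-; elim: (j - i) => [|k IHk] //.
by rewrite addSn nascS (leq_trans IHk) ?leq_addr.
Qed.

Lemma nasc_card : nasc n = #|[set b : 'I_n | ascent b]|.
Proof.
rewrite /nasc big_mkord -sum1_card [RHS]big_mkcond /=.
by apply: eq_bigr => b _; rewrite inE; case: (ascent b).
Qed.

Lemma descent_at q : q.+1 < n -> ~~ ascent q -> value_at q.+1 < value_at q.
Proof.
move=> lt_q1n; rewrite /ascent lt_q1n -leqNgt leq_eqVlt => /orP[/eqP|] //.
by move/(value_at_inj lt_q1n (ltnW lt_q1n)); lia.
Qed.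

Lemma nasc_run p q : p < q -> q < n ->
  nasc p <= nasc q /\ (nasc p = nasc q -> value_at q < value_at p).
Proof.
elim: q => [//|q IHq] lt_pq lt_qn.
have nasc_eq : nasc q = nasc q.+1 -> value_at q.+1 < value_at q.
  by rewrite nascS -[LHS]addn0 => /addnI; case: ascent (descent_at lt_qn) => // ->.
split; first exact: nasc_mono (ltnW lt_pq).
move: lt_pq; rewrite ltnS leq_eqVlt => /orP[/eqP -> //|lt_pq] eq_pq.
have [le_pq Hrun] := IHq lt_pq (ltnW lt_qn).
have eq_q : nasc q = nasc q.+1 by apply/eqP; rewrite eqn_leq nasc_mono //= -eq_pq.
by rewrite (ltn_trans (nasc_eq eq_q)) // Hrun // eq_q.
Qed.

Lemma ltn_pos_nasc (i j : 'I_n) : i != j ->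
  (i < j) = (nasc i < nasc j) || ((nasc i == nasc j) && (s j < s i)).
Proof.
move=> ne_ij; rewrite -!value_atE.
case: (ltngtP i j) => [lt_ij|lt_ji|/val_inj eq_ij]; last by rewrite eq_ij eqxx in ne_ij.
- have [le_ij run_ij] := nasc_run lt_ij (ltn_ord j).
  by case: (ltngtP (nasc i) (nasc j)) => //= [|/run_ij ->] //; lia.
- have [le_ji run_ji] := nasc_run lt_ji (ltn_ord i).
  by case: (ltngtP (nasc i) (nasc j)) => //= [|/esym/run_ji]; lia.
Qed.

(* The run code of a value [u] is the index of the descending run containing it. *)
Definition run_code (u : 'I_n) : nat := nasc (s^-1%g u).

Lemma ltn_perm_invE (u v : 'I_n) : u != v ->
  (s^-1%g u < s^-1%g v) =
  (run_code u < run_code v) || ((run_code u == run_code v) && (v < u)).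
Proof.
by move=> ne_uv; rewrite ltn_pos_nasc ?permKV // (inj_eq perm_inj).
Qed.

End Ascents.

Lemma perm_on_incr_id n (P : {set 'I_n}) (t : 'S_n) : perm_on P t ->
  {in P &, forall x y : 'I_n, x < y -> t x < t y} -> t = 1%g.
Proof.
move=> tP t_incr; apply/permP => x; rewrite perm1.
have [k lt_xk] := ubnP x; elim: k x lt_xk => // k IHk x lt_xk.
have [xP|xNP] := boolP (x \in P); last exact: out_perm tP xNP.
have txP : t x \in P by rewrite perm_closed.
have tVxP : (t^-1)%g x \in P by rewrite perm_closed ?perm_onV.
apply/val_inj/eqP; case: ltngtP => // [lt_tx|lt_xt].
- have fix_tx : t (t x) = t x by apply: IHk; rewrite (leq_trans lt_tx).
  by move/perm_inj: fix_tx => eq_tx; rewrite eq_tx ltnn in lt_tx.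
- case: (ltngtP ((t^-1)%g x) x) => [lt_y|lt_y|/val_inj eq_y].
  + have := IHk _ (leq_trans lt_y lt_xk); rewrite permKV => eq_x.
    by move: lt_y; rewrite -eq_x ltnn.
  + by have := t_incr _ _ xP tVxP lt_y; rewrite permKV ltnNge ltnW.
  + by move: lt_xt; rewrite -{2}eq_y permKV ltnn.
Qed.

Lemma run_code_inj n (s1 s2 : 'S_n) : run_code s1 =1 run_code s2 -> s1 = s2.
Proof.
move=> eq_code; apply/eqP; rewrite eq_mulgV1; apply/eqP.
apply: (@perm_on_incr_id _ setT); first by apply/subsetP => x; rewrite inE.
move=> x y _ _ lt_xy; rewrite !permM.
have ne_s1 : s1 x != s1 y by rewrite (inj_eq perm_inj) neq_ltn lt_xy.
by rewrite ltn_perm_invE // -!eq_code -ltn_perm_invE // !permK.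
Qed.

Lemma card_few_ascents n K : #|[set s : 'S_n | nasc s n <= K]| <= K.+1 ^ n.
Proof.
have -> : K.+1 ^ n = #|{ffun 'I_n -> 'I_K.+1}| by rewrite card_ffun !card_ord.
pose code (s : 'S_n) : {ffun 'I_n -> 'I_K.+1} := [ffun u => inord (run_code s u)].
apply: (@leq_card_in _ _ code) => s1 s2; rewrite !inE => few1 few2 eq_code.
apply: run_code_inj => u.
have /(congr1 val) := congr1 (fun f : {ffun 'I_n -> 'I_K.+1} => f u) eq_code.
have code_lt s : nasc s n <= K -> run_code s u < K.+1.
  by move=> few; rewrite ltnS (leq_trans _ few) // nasc_mono // ltnW.
by rewrite !ffunE /= !inordK ?code_lt.
Qed.

Definition decreasing_on n (P : {set 'I_n}) (s : 'S_n) : bool :=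
  [forall x in P, forall y in P, (x < y) ==> (s y < s x)].

Lemma decreasing_on_perm_on_id n (P : {set 'I_n}) (p1 p2 t : 'S_n) :
  decreasing_on P p1 -> decreasing_on P p2 -> perm_on P t ->
  p1 =1 p2 \o t -> t = 1%g.
Proof.
move=> dec1 dec2 tP eq_p; apply: (perm_on_incr_id tP) => x y xP yP lt_xy.
have txP : t x \in P by rewrite perm_closed.
have tyP : t y \in P by rewrite perm_closed.
case: (ltngtP (t x) (t y)) => // [lt_t|/val_inj/perm_inj eq_t].
- move/forall_inP/(_ x xP)/forall_inP/(_ y yP)/implyP/(_ lt_xy): dec1.
  move/forall_inP/(_ _ tyP)/forall_inP/(_ _ txP)/implyP/(_ lt_t): dec2.
  by rewrite !eq_p /=; lia.
- by rewrite eq_t ltnn in lt_xy.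
Qed.

(* Composing with the [#|P|`!] permutations of [P] is injective on permutations decreasing on [P]. *)
Lemma card_decreasing_on n (P : {set 'I_n}) :
  #|[set s : 'S_n | decreasing_on P s]| * #|P|`! <= n`!.
Proof.
rewrite -card_perm -(cardsE (perm_on P)) -cardsX -card_Sn.
set D := setX _ _; rewrite -(@card_in_imset _ _ (fun p => (p.2 * p.1)%g) D).
  exact: max_card.
case=> [p1 q1] [p2 q2]; rewrite !inE /= => /andP[dec1 q1P] /andP[dec2 q2P] eq_qp.
have tP : perm_on P (q1^-1 * q2)%g by rewrite perm_onM ?perm_onV.
have eq_p : p1 =1 p2 \o (q1^-1 * q2)%g.
  move=> y; move/permP/(_ ((q1^-1)%g y)): eq_qp.
  by rewrite /= !permM permKV.
have eq_p12 : p1 = p2.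
  by apply/permP => y; rewrite eq_p (decreasing_on_perm_on_id dec1 dec2 tP eq_p) /= perm1.
by rewrite eq_p12 in eq_qp *; rewrite (mulIg _ _ _ eq_qp).
Qed.

Lemma leq_card_bigcup (I T : finType) (P : pred I) (F : I -> {set T}) :
  #|\bigcup_(i | P i) F i| <= \sum_(i | P i) #|F i|.
Proof.
elim/big_rec2: _ => [|i U m _ IH]; first by rewrite cards0.
by rewrite (leq_trans (leq_card_setU _ _)) // leq_add2l.
Qed.

Definition long_decreasing n t : {set 'S_n} :=
  [set s | [exists P : {set 'I_n}, (t <= #|P|) && decreasing_on P s]].

Lemma card_long_decreasing n t : #|long_decreasing n t| * t`! <= 2 ^ n * n`!.
Proof.
have sub_cup : long_decreasing n t \subset
    \bigcup_(P : {set 'I_n} | t <= #|P|) [set s | decreasing_on P s].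
  apply/subsetP => s; rewrite inE => /existsP[P /andP[large_P dec]].
  by apply/bigcupP; exists P; rewrite ?inE.
rewrite (leq_trans (leq_mul (leq_trans (subset_leq_card sub_cup) (leq_card_bigcup _ _))
                            (leqnn _))) // big_distrl /=.
apply: (@leq_trans (\sum_(P : {set 'I_n}) n`!)).
  rewrite [X in _ <= X](bigID (fun P : {set 'I_n} => t <= #|P|)) /=.
  rewrite (leq_trans _ (leq_addr _ _)) //; apply: leq_sum => P large_P.
  by rewrite (leq_trans _ (card_decreasing_on P)) // leq_mul2l leq_fact ?orbT.
rewrite sum_nat_const leq_mul2r; apply/orP; right.
have <- : #|powerset [set: 'I_n]| = 2 ^ n by rewrite card_powerset cardsT card_ord.
by apply/subset_leq_card/subsetP => P _; rewrite powersetE subsetT.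
Qed.

Section Avoiders.
Variables (n : nat) (s : 'S_n).

Definition left_min : {set 'I_n} := [set l : 'I_n | [forall a : 'I_n, (a < l) ==> (s l < s a)]].
Definition right_max : {set 'I_n} := [set c : 'I_n | [forall a : 'I_n, (c < a) ==> (s a < s c)]].

Lemma decreasing_on_left_min : decreasing_on left_min s.
Proof.
apply/forall_inP => x _; apply/forall_inP => y; rewrite inE => /forallP/(_ x).
exact.
Qed.

Lemma decreasing_on_right_max : decreasing_on right_max s.
Proof.
apply/forall_inP => x; rewrite inE => /forallP x_max; apply/forall_inP => y _.
exact: x_max.
Qed.

(* An ascent at [b] whose bottom is not a left-to-right minimum and whose top is
   not a right-to-left maximum is the [23] of an occurrence of [1-23-4]. *)
Lemma ascent_right_max (b : 'I_n) : ~~ contains_1_23_4 s ->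
  ascent s b -> b \notin left_min -> ordS b \in right_max.
Proof.
move=> avoid /andP[lt_b1n asc_b]; rewrite !inE => /forallPn[a].
rewrite negb_imply -leqNgt => /andP[lt_ab le_ba].
apply/forallP => c; apply/implyP => lt_bc; rewrite ltnNge; apply/negP => le_bc.
have val_ordS : val (ordS b) = b.+1 by rewrite /= modn_small.
move: asc_b; rewrite -val_ordS !value_atE => asc_b.
have ne_val (x y : 'I_n) : x < y -> (s x : nat) != s y.
  by move=> lt_xy; rewrite val_eqE (inj_eq perm_inj) -val_eqE neq_ltn lt_xy.
case/negP: avoid; apply/existsP; exists a; apply/existsP; exists b.
apply/existsP; exists (ordS b); apply/existsP; exists c.
by rewrite lt_ab val_ordS eqxx lt_bc asc_b !ltn_neqAle le_ba le_bc !(ne_val _ _ lt_ab, ne_val _ _ lt_bc).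
Qed.

Lemma avoid_nasc_le : ~~ contains_1_23_4 s -> nasc s n <= #|left_min| + #|right_max|.
Proof.
move=> avoid; rewrite nasc_card; set A := [set b : 'I_n | ascent s b].
rewrite -(setID A left_min) (leq_trans (leq_card_setU _ _)) // leq_add //.
  by rewrite subset_leq_card ?subsetIr.
rewrite -(card_imset _ (@ordS_inj n)) subset_leq_card //.
apply/subsetP => c /imsetP[b]; rewrite in_setD /A inE => /andP[b_notL asc_b] ->.
exact: ascent_right_max.
Qed.

End Avoiders.

Lemma alpha_mul_fact_le n t : 0 < t ->
  alpha_1_23_4 n * t`! <= (2 * t) ^ n * t`! + 2 ^ n * n`!.
Proof.
move=> t_gt0; have t2_gt0 : 0 < 2 * t by rewrite muln_gt0.
have sub_avoid : [set s : 'S_n | ~~ contains_1_23_4 s] \subset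
    [set s : 'S_n | nasc s n <= (2 * t).-1] :|: long_decreasing n t.
  apply/subsetP => s; rewrite !inE => avoid.
  case: leqP => //= many_asc; have cover := avoid_nasc_le avoid.
  rewrite (ltn_predK t2_gt0) in many_asc.
  apply/existsP; case: (leqP t #|left_min s|) => [large_L|small_L].
    by exists (left_min s); rewrite large_L decreasing_on_left_min.
  exists (right_max s); rewrite decreasing_on_right_max andbT.
  move: cover many_asc small_L; set x := #|left_min s|; set y := #|right_max s|; lia.
rewrite /alpha_1_23_4 (leq_trans (leq_mul (leq_trans (subset_leq_card sub_avoid)
                                          (leq_card_setU _ _)) (leqnn _))) //.
rewrite mulnDl leq_add ?card_long_decreasing // leq_mul2r.
by have := card_few_ascents n (2 * t).-1; rewrite (ltn_predK t2_gt0) => ->; rewrite orbT.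
Qed.

Section RealBounds.
Local Open Scope R_scope.

Lemma INR_expn m k : INR (m ^ k)%N = INR m ^ k.
Proof. by elim: k => [|k IHk]; rewrite ?expn0 // expnS -multE mult_INR IHk. Qed.

(* [(1 + 1/k)^k <= e <= 3] *)
Lemma succ_pow_le k : (0 < k)%N -> (k.+1 ^ k <= 3 * k ^ k)%N.
Proof.
move=> k_gt0; apply/leP/INR_le; rewrite -multE mult_INR !INR_expn.
have kR_gt0 : 0 < INR k by apply/lt_0_INR/ltP.
have -> : INR k.+1 = INR k * (1 + / INR k) by rewrite S_INR; field; lra.
rewrite Rpow_mult_distr Rmult_comm; apply: Rmult_le_compat_r; first by apply: pow_le; lra.
apply: (@Rle_trans _ (exp (/ INR k) ^ k)).
  apply: pow_incr; split; last exact: exp_ineq1_le.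
  by have := Rinv_0_lt_compat _ kR_gt0; lra.
rewrite -Rpower_pow; last exact: exp_pos.
rewrite /Rpower ln_exp Rinv_r; last lra.
by have := exp_le_3; rewrite INR_IZR_INZ.
Qed.

End RealBounds.

Lemma pow_self_le_fact n : n ^ n <= 3 ^ n * n`!.
Proof.
elim: n => [//|n IHn]; case: n IHn => [//|n] IHn.
rewrite expnS factS (leq_trans (leq_mul (leqnn _) (succ_pow_le (ltn0Sn n)))) //.
rewrite (leq_trans (leq_mul (leqnn n.+2) (leq_mul (leqnn 3) IHn))) //.
by rewrite !expnS; move: (3 ^ n) (n.+1)`! => a b; nia.
Qed.

Lemma pow_le_fact T t : T <= t -> T ^ (t - T) <= t`!.
Proof.
elim: t => [|t IHt]; first by rewrite leqn0 => /eqP ->.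
rewrite leq_eqVlt => /orP[/eqP ->|]; first by rewrite subnn expn0 fact_gt0.
by rewrite ltnS => le_Tt; rewrite subSn // expnS factS leq_mul ?IHt // ltnW.
Qed.

Lemma pow_le_half_fact n c : 0 < n -> 6 * c <= n -> 2 * c ^ n <= n`!.
Proof.
move=> n_gt0 le_6c_n.
have le_2n : 2 * c ^ n <= 2 ^ n * c ^ n.
  by rewrite leq_mul2r -{1}(expn1 2) leq_pexp2l ?orbT.
rewrite (leq_trans le_2n) // -(leq_pmul2l (expn_gt0 3 n)) mulnA -!expnMn.
by rewrite (leq_trans _ (pow_self_le_fact n)) // leq_exp2r // mulnA.
Qed.

Lemma pow_le_fact_quot M k t n : 1 < M -> 2 * M ^ (2 * k) < t -> n < t.+1 * k ->
  2 * M ^ n <= t`!.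
Proof.
move=> M_gt1 large_t lt_n; set T := M ^ (2 * k).
apply: (leq_trans _ (pow_le_fact (_ : T <= t))); last by lia.
rewrite /T -expnM (@leq_trans (M ^ n.+1)) //; first by rewrite expnS leq_mul2r M_gt1 orbT.
by apply: leq_pexp2l; [lia | nia].
Qed.

Lemma alpha_mul_pow_le_fact_of n t d : 0 < t ->
  2 * (2 * t * d) ^ n <= n`! -> 2 * (2 * d) ^ n <= t`! ->
  alpha_1_23_4 n * d ^ n <= n`!.
Proof.
move=> t_gt0; have := alpha_mul_fact_le n t_gt0.
rewrite [(2 * t * d) ^ n]expnMn [(2 * d) ^ n]expnMn; have := fact_gt0 t.
move: (alpha_1_23_4 n) ((2 * t) ^ n) (2 ^ n) (d ^ n) (t`!) (n`!) => a p q D f g f_gt0.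
move=> /(leq_mul (leqnn D)) avoid /(leq_mul (leqnn f)) small_p /(leq_mul (leqnn g)) small_q.
rewrite -(leq_pmul2r f_gt0); nia.
Qed.

Lemma alpha_mul_pow_le_fact d : 0 < d ->
  exists N, forall n, N <= n -> alpha_1_23_4 n * d ^ n <= n`!.
Proof.
move=> d_gt0; set m := 12 * d; set T := (2 * d) ^ (2 * m).
exists (m * (2 * T + 1)) => n le_n; set t := n %/ m.
have m_gt0 : 0 < m by rewrite muln_gt0.
have large_t : 2 * T < t by rewrite /t leq_divRL //; lia.
apply: (@alpha_mul_pow_le_fact_of _ t); first by lia.
  apply: pow_le_half_fact; first by lia.
  by have := leq_divM n m; rewrite -/t /m; lia.
by apply: (pow_le_fact_quot _ large_t); [lia | exact: ltn_ceil].
Qed.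

Lemma alpha_gt0 n : 0 < alpha_1_23_4 n.
Proof.
apply/card_gt0P; exists (perm (@rev_ord_inj n)); rewrite inE.
apply/existsPn => a; apply/existsPn => b; apply/existsPn => b1; apply/existsPn => c.
rewrite !permE /=; case: ltnP => //= lt_ab.
by rewrite negb_and; apply/orP; right; rewrite negb_and -leqNgt; apply/orP; right; lia.
Qed.

Local Open Scope R_scope.

Lemma ratio_mul_pow_le1 a f d n : (0 < f)%N -> (a * d ^ n <= f)%N ->
  INR a / INR f * INR d ^ n <= 1.
Proof.
move=> f_gt0 le_af; have f_gt0R : 0 < INR f by apply/lt_0_INR/ltP.
rewrite /Rdiv Rmult_assoc Rmult_comm Rmult_assoc -INR_expn -mult_INR.
apply: (Rmult_le_reg_l _ _ _ f_gt0R).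
rewrite -Rmult_assoc Rinv_r ?Rmult_1_l ?Rmult_1_r; last exact: Rgt_not_eq.
by apply/le_INR/leP; rewrite multE mulnC.
Qed.

Lemma Rpower_root_le x d n : 0 < x -> 0 < INR d -> (0 < n)%N ->
  x * INR d ^ n <= 1 -> Rpower x (/ INR n) <= / INR d.
Proof.
move=> x_gt0 d_gt0 n_gt0 small_x.
have n_gt0' : 0 < INR n by apply/lt_0_INR/ltP.
have dn_gt0 : 0 < INR d ^ n by apply: pow_lt.
have x_le : x <= (/ INR d) ^ n.
  rewrite pow_inv; apply: (Rmult_le_reg_r _ _ _ dn_gt0).
  by rewrite Rinv_l //; apply: Rgt_not_eq.
apply: (Rle_trans _ _ _ (Rle_Rpower_l _ _ _ _ (conj x_gt0 x_le))).
  by apply/Rlt_le/Rinv_0_lt_compat.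
rewrite -Rpower_pow; last exact: Rinv_0_lt_compat.
rewrite Rpower_mult Rinv_r; last exact: Rgt_not_eq.
by rewrite Rpower_1; [apply: Rle_refl | apply: Rinv_0_lt_compat].
Qed.

Theorem mainTheorem11 :
  Un_cv (fun n : nat =>
           Rpower (INR (alpha_1_23_4 n) / INR (n`!)%nat) (/ INR n)) 0.
Proof.
move=> eps eps_gt0.
have [d [lt_d_eps d_gt0]] := archimed_cor1 _ eps_gt0.
have [N HN] := alpha_mul_pow_le_fact (introT ltP d_gt0).
exists N.+1 => n lt_Nn; have le_Nn : (N <= n)%N by apply/leP; lia.
(* [Rpower 0 y = 1], so the positivity of [alpha_1_23_4 n] is needed. *)
have ratio_gt0 : 0 < INR (alpha_1_23_4 n) / INR n`!.
  by apply: Rdiv_lt_0_compat; apply/lt_0_INR/ltP; [exact: alpha_gt0 | exact: fact_gt0].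
rewrite /R_dist Rminus_0_r Rabs_right; last exact/Rle_ge/Rlt_le/exp_pos.
apply: Rle_lt_trans lt_d_eps; apply: Rpower_root_le => //.
- exact: lt_0_INR.
- by apply/ltP; lia.
- by apply: ratio_mul_pow_le1; [exact: fact_gt0 | exact: HN].
Qed.
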